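(* Let $T=(p,q:F\to E)$ be a textile system with $p$ and $q$ surjective. Let $G_T$ be the associated 2-colored graph and $\sim$ the associated equivalence relation on its path category $G_T^*$. Then the quotient category $\Lambda_T=G_T^*/\sim$, with degree induced by the colors, is a 2-graph if and only if $T$ is LR.
   Context: Directed graph $E=(E^0,E^1,r,s)$. Textile system $T=(p,q:F\to E)$: graph homomorphisms $p,q$ (maps on vertices and edges commuting with $r,s$) with $f\mapsto(r(f),p(f),s(f),q(f))$ injective on $F^1$. LR: $p$ has unique $r$-path lifting (for $v\in F^0,e\in E^1$ with $p(v)=r(e)$, exactly one $f\in F^1$ with $r(f)=v,p(f)=e$) and $q$ has unique $s$-path lifting (same with $s$). A 2-graph is a countable category $\Lambda$ with a functor $d:\Lambda\to\mathbb N^2$ such that if $d(\lambda)=m+n$ there are unique $\mu,\nu$ with $d(\mu)=m,d(\nu)=n,\lambda=\mu\nu$ (composition $\mu\nu$ when $s(\mu)=r(\nu)$). The 2-colored graph $G_T$: vertices $E^0$; edges $E^1\sqcup F^0$; edges $e\in E^1$ have color $\varepsilon_1$ and range, source from $E$; edges $w\in F^0$ have color $\varepsilon_2$, $s(w)=p(w)$, $r(w)=q(w)$. Paths are composed right to left ($\alpha\beta$ is a path when $s(\alpha)=r(\beta)$), and the degree of a path counts edges of each color. The relation $\sim$: each vertex and edge is equivalent only to itself; on two-edge two-colored paths, $ve\sim e'w$ iff there is $f\in F^1$ with $r(f)=v$, $s(f)=w$, $p(f)=e$, $q(f)=e'$; $\sim$ is extended to all paths as the equivalence relation generated by these relations and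 compatible with concatenation ($[\lambda\mu]=[\lambda][\mu]$). *)

From mathcomp Require Import all_boot.

Set Implicit Arguments.
Unset Strict Implicit.
Unset Printing Implicit Defensive.

Record graph := Graph {
  vtx : countType;
  edg : countType;
  rg : edg -> vtx;
  sc : edg -> vtx
}.

Record ghom (F E : graph) := GHom {
  hv : vtx F -> vtx E;
  he : edg F -> edg E;
  hom_r : forall f, rg (he f) = hv (rg f);
  hom_s : forall f, sc (he f) = hv (sc f)
}.

Definition surjective_hom (F E : graph) (p : ghom F E) : Prop :=
  (forall v : vtx E, exists w, hv p w = v) /\
  (forall e : edg E, exists f, he p f = e).

Definition textile (F E : graph) (p q : ghom F E) : Prop :=
  forall f g : edg F,
    rg f = rg g -> he p f = he p g -> sc f = sc g -> he q f = he q g -> f = g.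

Definition LR (F E : graph) (p q : ghom F E) : Prop :=
  (forall (v : vtx F) (e : edg E), hv p v = rg e ->
      exists! f : edg F, rg f = v /\ he p f = e) /\
  (forall (v : vtx F) (e : edg E), hv q v = sc e ->
      exists! f : edg F, sc f = v /\ he q f = e).

Section TwoColoredGraph.
Variables (F E : graph) (p q : ghom F E).

(* Edges of G_T: E^1 (color eps1, inl) and F^0 (color eps2, inr). *)
Definition GTedge : Type := (edg E + vtx F)%type.

Definition gt_r (a : GTedge) : vtx E :=
  match a with inl e => rg e | inr w => hv q w end.
Definition gt_s (a : GTedge) : vtx E :=
  match a with inl e => sc e | inr w => hv p w end.

(* A path of G_T is represented by its range vertex x together with its
   sequence of edges [a_1; ...; a_n], composed right to left:
   r(a_1) = x and s(a_i) = r(a_{i+1}).  The empty sequence is the vertex x. *)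
Definition GTpath : Type := (vtx E * seq GTedge)%type.

Fixpoint valid_from (x : vtx E) (l : seq GTedge) : Prop :=
  match l with
  | [::] => True
  | a :: l' => gt_r a = x /\ valid_from (gt_s a) l'
  end.

Definition is_path (la : GTpath) : Prop := valid_from la.1 la.2.

Definition prange (la : GTpath) : vtx E := la.1.
Definition psource (la : GTpath) : vtx E := last la.1 (map gt_s la.2).

(* Concatenation lambda mu (meaningful when psource lambda = prange mu). *)
Definition pcat (la mu : GTpath) : GTpath := (la.1, la.2 ++ mu.2).

Definition is_col1 (a : GTedge) : bool := if a is inl _ then true else false.
Definition is_col2 (a : GTedge) : bool := if a is inr _ then true else false.
Definition pdeg (la : GTpath) : nat * nat :=
  (count is_col1 la.2, count is_col2 la.2).

Definition addNN (m n : nat * nat) : nat * nat := (m.1 + n.1, m.2 + n.2)%N.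

Definition basic_rel (la mu : GTpath) : Prop :=
  exists f : edg F,
    la = (hv q (rg f), [:: inr (rg f); inl (he p f)]) /\
    mu = (hv q (rg f), [:: inl (he q f); inr (sc f)]).

Inductive sim : GTpath -> GTpath -> Prop :=
  | sim_refl la : is_path la -> sim la la
  | sim_sym la mu : sim la mu -> sim mu la
  | sim_trans la mu nu : sim la mu -> sim mu nu -> sim la nu
  | sim_basic la mu : basic_rel la mu -> sim la mu
  | sim_cat la la' mu mu' :
      sim la la' -> sim mu mu' ->
      psource la = prange mu -> psource la' = prange mu' ->
      sim (pcat la mu) (pcat la' mu').

(* Lambda_T = G_T^* / ~ (morphisms = ~-classes of paths, composition induced
   by concatenation, degree induced by the colors) is a 2-graph:
   the degree is well defined on classes, and every class [lambda] with
   d(lambda) = m + n factors uniquely as [mu][nu] with d(mu) = m, d(nu) = n. *)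
Definition Lambda_T_is_2graph : Prop :=
  (forall la la', sim la la' -> pdeg la = pdeg la') /\
  (forall la (m n : nat * nat), is_path la -> pdeg la = addNN m n ->
     exists mu nu, is_path mu /\ is_path nu /\ psource mu = prange nu /\
                   pdeg mu = m /\ pdeg nu = n /\ sim la (pcat mu nu)) /\
  (forall mu nu mu' nu',
     is_path mu -> is_path nu -> is_path mu' -> is_path nu' ->
     psource mu = prange nu -> psource mu' = prange nu' ->
     pdeg mu = pdeg mu' -> pdeg nu = pdeg nu' ->
     sim (pcat mu nu) (pcat mu' nu') ->
     sim mu mu' /\ sim nu nu').

End TwoColoredGraph.

From mathcomp Require Import all_boot.
From Stdlib Require Import Classical.

(* If T is LR, every path is equivalent to exactly one path whose eps1-edges all
   precede (on the range side) its eps2-edges.  The normal form [nf] reads a path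
   from its source end and slides each eps2-edge v past the eps1-edges already
   read, using the unique p-lifts at v; uniqueness of these lifts makes [nf]
   invariant under the basic relations.  Factorizations are obtained by cutting a
   normal form and re-sorting the middle with q-lifts, and they are unique
   because sliding is injective (unique q-lifts).
   Conversely, in a 2-graph the word v e must also factor as e' w, so v e occurs
   in a basic relation and e has a p-lift at v; for two lifts f, g, unique
   factorization of q(f) s(f) ~ v e ~ q(g) s(g) gives q f = q g and s f = s g,
   and the textile condition gives f = g.  Symmetrically for q-lifts. *)

Set Implicit Arguments.
Unset Strict Implicit.
Unset Printing Implicit Defensive.

Lemma cat_inj (T : eqType) (s1 s2 t1 t2 : seq T) :
  size s1 = size t1 -> s1 ++ s2 = t1 ++ t2 -> s1 = t1 /\ s2 = t2.
Proof. by move=> sz /eqP; rewrite eqseq_cat // => /andP[/eqP -> /eqP ->]. Qed.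

Lemma cat_inj_r (T : eqType) (s1 s2 t1 t2 : seq T) :
  size s2 = size t2 -> s1 ++ s2 = t1 ++ t2 -> s1 = t1 /\ s2 = t2.
Proof.
move=> sz ecat; apply: cat_inj (ecat).
by apply/(@addIn (size s2)); rewrite -size_cat ecat size_cat sz.
Qed.

Section Paths.
Variables (F E : graph) (p q : ghom F E).

Local Notation sim := (sim p q).
Local Notation valid := (valid_from p q).
Local Notation is_path := (is_path p q).
Local Notation word := (seq (GTedge F E)).
Local Notation Inl := (@inl (edg E) (vtx F)).
Local Notation Inr := (@inr (edg E) (vtx F)).

Definition wsource (x : vtx E) (l : word) : vtx E := last x (map (gt_s p) l).

Lemma valid_cat x l1 l2 :
  valid x (l1 ++ l2) <-> valid x l1 /\ valid (wsource x l1) l2.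
Proof. by elim: l1 x => [|a l1 IH] x /=; rewrite ?IH; tauto. Qed.

Lemma sim_is_path la mu : sim la mu -> is_path la /\ is_path mu.
Proof.
elim=> {la mu} //.
- by move=> la mu _ [].
- by move=> la mu nu _ [? _] _ [_ ?].
- by move=> la mu [f [-> ->]]; rewrite /is_path /= !hom_r hom_s.
- move=> la la' mu mu' _ [V1 V1'] _ [V2 V2'] E1 E2.
  rewrite /is_path /pcat /= !valid_cat.
  by move: E1 E2; rewrite /psource /prange /wsource => -> ->.
Qed.

Lemma sim_range la mu : sim la mu -> prange la = prange mu.
Proof. by elim=> {la mu} // [la mu nu _ -> _ ->|la mu [f [-> ->]]]. Qed.

Lemma psource_cat la mu :
  psource p la = prange mu -> psource p (pcat la mu) = psource p mu.
Proof. by rewrite /psource /pcat map_cat last_cat => ->. Qed.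

Lemma sim_source la mu : sim la mu -> psource p la = psource p mu.
Proof.
elim=> {la mu} //.
- by move=> la mu nu _ -> _ ->.
- by move=> la mu [f [-> ->]]; rewrite /psource /= hom_s.
- by move=> la la' mu mu' _ _ _ + E1 E2; rewrite !psource_cat.
Qed.

Lemma sim_deg la mu : sim la mu -> pdeg la = pdeg mu.
Proof.
elim=> {la mu} // [la mu nu _ -> _ ->|la mu [f [-> ->]]|] //.
by move=> la la' mu mu' _ + _ + _ _; rewrite /pdeg /pcat /= !count_cat => -[-> ->] [-> ->].
Qed.

Lemma sim_size la mu : sim la mu -> size la.2 = size mu.2.
Proof.
elim=> {la mu} // [la mu nu _ -> _ ->|la mu [f [-> ->]]|] //.
by move=> la la' mu mu' _ S1 _ S2 _ _; rewrite !size_cat S1 S2.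
Qed.

Lemma sim_short la mu : sim la mu -> size la.2 <= 1 -> la = mu.
Proof.
elim=> {la mu} //.
- by move=> la mu S IH; rewrite -(sim_size S) => /IH ->.
- by move=> la mu nu _ IH1 _ IH2 /[dup] /IH1 -> /IH2.
- by move=> la mu [f [-> ->]].
- move=> la la' mu mu' _ IH1 _ IH2 _ _; rewrite /pcat size_cat => le.
  have le1 : size la.2 <= 1 by apply: leq_trans le; apply: leq_addr.
  have le2 : size mu.2 <= 1 by apply: leq_trans le; apply: leq_addl.
  by rewrite -IH1 // -IH2.
Qed.

Lemma sim_prefix x k y m m' :
  sim (y, m) (y, m') -> valid x k -> wsource x k = y -> sim (x, k ++ m) (x, k ++ m').
Proof. by move=> S Vk Ey; apply: (sim_cat (sim_refl (la := (x, k)) Vk) S). Qed.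

Lemma sim_suffix x m m' r :
  sim (x, m) (x, m') -> valid (psource p (x, m)) r -> sim (x, m ++ r) (x, m' ++ r).
Proof.
move=> S Vr; apply: (sim_cat S (sim_refl (la := (psource p (x, m), r)) Vr)) => //.
by rewrite -(sim_source S).
Qed.

Lemma sim_basic_of f :
  sim (hv q (rg f), [:: Inr (rg f); Inl (he p f)]) (hv q (rg f), [:: Inl (he q f); Inr (sc f)]).
Proof. by apply: sim_basic; exists f. Qed.

Lemma sim_subword x k y m m' r :
  sim (y, m) (y, m') -> valid x (k ++ m ++ r) -> wsource x k = y ->
  sim (x, k ++ m ++ r) (x, k ++ m' ++ r).
Proof.
move=> S /valid_cat[Vk /valid_cat[_ Vr]] Ey.
by subst y; apply: sim_prefix => //; apply: sim_suffix.
Qed.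

Lemma pdeg_cat x y (l1 l2 : word) : pdeg (x, l1 ++ l2) = addNN (pdeg (x, l1)) (pdeg (y, l2)).
Proof. by rewrite /pdeg /= !count_cat. Qed.

Lemma pdeg_inl x A : pdeg (x, map Inl A) = (size A, 0).
Proof. by rewrite /pdeg; elim: A => //= e A [-> ->]. Qed.

Lemma pdeg_inr x B : pdeg (x, map Inr B) = (0, size B).
Proof. by rewrite /pdeg; elim: B => //= v B [-> ->]. Qed.

Section NormalForm.
Hypothesis HLR : LR p q.

Lemma rlift_exists v e : hv p v = rg e -> exists f, (rg f == v) && (he p f == e).
Proof. by case/(HLR.1 v e) => f [[<- <-] _]; exists f; rewrite !eqxx. Qed.

Definition rlift v e : option (edg F) :=
  if hv p v =P rg e is ReflectT h then Some (xchoose (rlift_exists h)) else None.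

Lemma rlift_spec v e f : rlift v e = Some f -> rg f = v /\ he p f = e.
Proof.
rewrite /rlift; case: eqP => // h [<-].
by have /andP[/eqP -> /eqP ->] := xchooseP (rlift_exists h).
Qed.

Lemma rlift_some v e : rg e = hv p v -> exists f, rlift v e = Some f.
Proof. by move=> he; rewrite /rlift; case: eqP => [h|/(_ (esym he))//]; eexists. Qed.

Lemma rlift_of f : rlift (rg f) (he p f) = Some f.
Proof.
have [g lg] := rlift_some (hom_r p f).
have [rg_g pg] := rlift_spec lg.
have [h [_ uniq]] := HLR.1 (rg f) (he p f) (esym (hom_r p f)).
by rewrite lg -(uniq f) // (uniq g).
Qed.

(* On paths the fallback branch [(A, v)] is never reached. *)
Fixpoint slide (v : vtx F) (A : seq (edg E)) : seq (edg E) * vtx F :=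
  if A is e :: A' then
    if rlift v e is Some f then (he q f :: (slide (sc f) A').1, (slide (sc f) A').2)
    else (A, v)
  else ([::], v).

Lemma size_slide v A : size (slide v A).1 = size A.
Proof. by elim: A v => [|e A IH] v //=; case: rlift => //= f; rewrite IH. Qed.

Lemma sim_slide v A : valid (hv p v) (map Inl A) ->
  sim (hv q v, Inr v :: map Inl A) (hv q v, map Inl (slide v A).1 ++ [:: Inr (slide v A).2]).
Proof.
elim: A v => [|e A IH] v /=; first by move=> _; apply: sim_refl.
case=> ev VA; have [f lf] := rlift_some ev; rewrite lf /=.
case: (rlift_spec lf) => fv fe; subst v e.
apply: (sim_trans (sim_suffix (sim_basic_of f) VA)).
apply: (sim_prefix (k := [:: Inl (he q f)])); rewrite /= ?hom_r //.
by rewrite /wsource /= hom_s; apply: IH; rewrite -hom_s.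
Qed.

Definition nf_step (a : GTedge F E) (N : seq (edg E) * seq (vtx F)) :=
  match a with
  | inl e => (e :: N.1, N.2)
  | inr v => ((slide v N.1).1, (slide v N.1).2 :: N.2)
  end.

Definition nf (l : word) := foldr nf_step ([::], [::]) l.

Definition nf_word (N : seq (edg E) * seq (vtx F)) : word := map Inl N.1 ++ map Inr N.2.

Lemma sim_foldr_nf_step la mu :
  sim la mu -> forall N, foldr nf_step N la.2 = foldr nf_step N mu.2.
Proof.
elim=> {la mu} [//|la mu _ IH N|la mu nu _ IH1 _ IH2 N|la mu [f [-> ->]] N|].
- by rewrite IH.
- by rewrite IH1 IH2.
- by rewrite /= rlift_of.
- by move=> la la' mu mu' _ IH1 _ IH2 _ _ N; rewrite !foldr_cat IH1 IH2.
Qed.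

Lemma sim_nf la mu : sim la mu -> nf la.2 = nf mu.2.
Proof. by move=> S; apply: sim_foldr_nf_step. Qed.

Lemma sim_nf_word x l : valid x l -> sim (x, l) (x, nf_word (nf l)).
Proof.
elim: l x => [|[e|v] l IH] x /=; first by move=> _; apply: sim_refl.
- by case=> <- Vl; apply: (sim_prefix (k := [:: Inl e])) (IH _ Vl) _ _.
- case=> <- Vl; have S := IH _ Vl.
  have [_ /valid_cat[VA VB]] := sim_is_path S.
  apply: (sim_trans (sim_prefix (k := [:: Inr v]) S _ _)) => //.
  rewrite /nf_word /= -cat_rcons -cats1.
  exact: (sim_suffix (m := Inr v :: _) (sim_slide VA) VB).
Qed.

Lemma pdeg_nf_word x N : pdeg (x, nf_word N) = (size N.1, size N.2).
Proof. by rewrite (pdeg_cat _ x) pdeg_inl pdeg_inr /addNN addn0. Qed.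

Lemma size_nf x l : valid x l -> (size (nf l).1, size (nf l).2) = pdeg (x, l).
Proof. by move/sim_nf_word/sim_deg ->; rewrite pdeg_nf_word. Qed.

Lemma nf_inl A l : nf (map Inl A ++ l) = (A ++ (nf l).1, (nf l).2).
Proof. by rewrite /nf foldr_cat; elim: A => [|e A /= ->] //=; case: foldr. Qed.

Lemma nf_inr l B : nf (l ++ map Inr B) = ((nf l).1, (nf l).2 ++ B).
Proof.
elim: l => [|[e|v] l /= ->] //.
by rewrite /nf /=; elim: B => //= v B ->.
Qed.

Lemma slide_inj v v' A A' :
  valid (hv p v) (map Inl A) -> valid (hv p v') (map Inl A') ->
  slide v A = slide v' A' -> v = v' /\ A = A'.
Proof.
move=> V V' eq_slide; have := congr1 (size \o fst) eq_slide; rewrite /= !size_slide.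
elim: A A' v v' V V' eq_slide => [|e A IH] [|e' A'] v v' //=; first by move=> _ _ [].
case=> ev VA [e'v' VA']; have [f lf] := rlift_some ev; have [f' lf'] := rlift_some e'v'.
rewrite lf lf' => -[eq_q eq1 eq2] [eq_size].
case: (rlift_spec lf) (rlift_spec lf') => fv fe [f'v' f'e']; subst v v' e e'.
rewrite hom_s in VA; rewrite hom_s in VA'.
have [eq_s ->] := IH _ _ _ VA VA' (injective_projections _ _ eq1 eq2) eq_size.
have [g [_ uniq_g]] := HLR.2 (sc f) (he q f) (esym (hom_s q f)).
by rewrite -(uniq_g f) // (uniq_g f').
Qed.

Lemma nf_mixed_inj y y' B C B' C' :
  valid y (map Inr B ++ map Inl C) -> valid y' (map Inr B' ++ map Inl C') ->
  nf (map Inr B ++ map Inl C) = nf (map Inr B' ++ map Inl C') -> B = B' /\ C = C'.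
Proof.
have nf_inl0 C0 : nf (map Inl C0) = (C0, [::]) by rewrite -[map _ _]cats0 nf_inl cats0.
elim: B B' y y' => [|v B IH] [|v' B'] y y' /=; rewrite ?nf_inl0.
all: try by move=> _ _ [].
move=> [_ V] [_ V'] [eq1 eq2 eq3].
have [_ /valid_cat[VA _]] := sim_is_path (sim_nf_word V).
have [_ /valid_cat[VA' _]] := sim_is_path (sim_nf_word V').
have [-> eq_A] := slide_inj VA VA' (injective_projections _ _ eq1 eq2).
by have [-> ->] := IH _ _ _ V V' (injective_projections _ _ eq_A eq3).
Qed.

Lemma sim_unslide y A w : valid y (map Inl A ++ [:: Inr w]) ->
  exists v A', size A' = size A /\
    sim (y, map Inl A ++ [:: Inr w]) (y, Inr v :: map Inl A').
Proof.
elim: A y => [|e A IH] y /=; first by exists w, [::]; split => //; apply: sim_refl.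
case=> ey V; have [v [A1 [sz S]]] := IH _ V.
have [_ [qv VA1]] := sim_is_path S.
have [f [[sf qf] _]] := HLR.2 v e qv; subst v e.
exists (rg f), (he p f :: A1); split; first by rewrite /= sz.
apply: (sim_trans (sim_prefix (k := [:: Inl (he q f)]) S _ _)) => //.
rewrite -ey hom_r; apply/sim_sym/(sim_suffix (sim_basic_of f)).
by rewrite /psource /= hom_s.
Qed.

Lemma sim_swap y A B : valid y (map Inl A ++ map Inr B) ->
  exists B' A', size B' = size B /\ size A' = size A /\
    sim (y, map Inl A ++ map Inr B) (y, map Inr B' ++ map Inl A').
Proof.
elim: B A y => [|w B IH] A y V.
  by exists [::], A; rewrite cats0 in V *; do 2!split => //; apply: sim_refl.
rewrite /= -cat_rcons -cats1 in V *.
have /valid_cat[/sim_unslide[v [A0 [szA0 S]]] VB] := V.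
have S1 := sim_suffix S VB.
have [_ [qv V0]] := sim_is_path S1.
have [B1 [A1 [szB1 [szA1 S2]]]] := IH _ _ V0.
exists (v :: B1), A1; rewrite /= szB1 szA1 szA0; do 2!split => //.
apply: sim_trans S1 _.
exact: (sim_prefix (k := [:: Inr v]) S2 (conj qv I)).
Qed.

Lemma sim_nf_split x l A1 A2 B1 B2 : valid x l -> nf l = (A1 ++ A2, B1 ++ B2) ->
  exists B1' A2', size B1' = size B1 /\ size A2' = size A2 /\
    sim (x, l) (x, (map Inl A1 ++ map Inr B1') ++ (map Inl A2' ++ map Inr B2)).
Proof.
move=> V eq_nf; have S := sim_nf_word V.
rewrite /nf_word eq_nf !map_cat -catA (catA (map Inl A2)) in S.
have [_ /[dup] V' /valid_cat[_ /valid_cat[Vmid _]]] := sim_is_path S.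
have [B1' [A2' [szB [szA Sw]]]] := sim_swap Vmid.
exists B1', A2'; do 2!split => //.
by rewrite -catA [map Inr B1' ++ _]catA; apply: sim_trans S (sim_subword Sw V' _).
Qed.

Lemma factorization_exists la m n : is_path la -> pdeg la = addNN m n ->
  exists mu nu, is_path mu /\ is_path nu /\ psource p mu = prange nu /\
    pdeg mu = m /\ pdeg nu = n /\ sim la (pcat mu nu).
Proof.
case: la m n => x l [m1 m2] [n1 n2] V deg_l.
have := size_nf V; rewrite deg_l => -[szA szB].
have eq_nf : nf l = (take m1 (nf l).1 ++ drop m1 (nf l).1, take m2 (nf l).2 ++ drop m2 (nf l).2).
  by rewrite !cat_take_drop; case: nf.
have [B1 [A2 [szB1 [szA2 S]]]] := sim_nf_split V eq_nf.
have [_ /valid_cat[Vmu Vnu]] := sim_is_path S.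
exists (x, map Inl (take m1 (nf l).1) ++ map Inr B1).
exists (wsource x (map Inl (take m1 (nf l).1) ++ map Inr B1), map Inl A2 ++ map Inr (drop m2 (nf l).2)).
do 3!split => //.
rewrite !(pdeg_cat _ x) !pdeg_inl !pdeg_inr szB1 szA2 !size_drop szA szB !addKn.
by rewrite !size_takel ?szA ?szB ?leq_addr // /addNN /= !addn0 !add0n.
Qed.

Lemma sim_nf_word_cat x l1 l2 : valid x (l1 ++ l2) ->
  sim (x, l1 ++ l2) (x, nf_word (nf l1) ++ nf_word (nf l2)).
Proof.
case/valid_cat=> V1 V2; have S1 := sim_nf_word V1.
apply: (sim_cat S1 (sim_nf_word V2)) => //.
by rewrite -(sim_source S1).
Qed.

Lemma nf_cat x l1 l2 : valid x (l1 ++ l2) ->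
  nf (l1 ++ l2) =
  ((nf l1).1 ++ (nf (map Inr (nf l1).2 ++ map Inl (nf l2).1)).1,
   (nf (map Inr (nf l1).2 ++ map Inl (nf l2).1)).2 ++ (nf l2).2).
Proof.
move/sim_nf_word_cat/sim_nf => /= ->.
by rewrite /nf_word -catA (catA (map Inr _)) nf_inl nf_inr.
Qed.

Lemma valid_nf_seam x l1 l2 : valid x (l1 ++ l2) ->
  valid (wsource x (map Inl (nf l1).1)) (map Inr (nf l1).2 ++ map Inl (nf l2).1).
Proof.
move/sim_nf_word_cat/sim_is_path => [_].
by rewrite /nf_word /= -catA (catA (map Inr _)) => /valid_cat[_ /valid_cat[]].
Qed.

Lemma nf_cat_inj x l1 l2 x' l1' l2' :
  valid x (l1 ++ l2) -> valid x' (l1' ++ l2') ->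
  pdeg (x, l1) = pdeg (x', l1') -> pdeg (wsource x l1, l2) = pdeg (wsource x' l1', l2') ->
  nf (l1 ++ l2) = nf (l1' ++ l2') -> nf l1 = nf l1' /\ nf l2 = nf l2'.
Proof.
move=> V V' deg1 deg2; rewrite (nf_cat V) (nf_cat V') => -[eqA eqB].
move: (V) (V') => /valid_cat[V1 V2] /valid_cat[V1' V2'].
move: deg1 deg2; rewrite -(size_nf V1) -(size_nf V1') -(size_nf V2) -(size_nf V2').
move=> [szA1 _] [_ szB2].
have [eqA1 eqM1] := cat_inj szA1 eqA; have [eqM2 eqB2] := cat_inj_r szB2 eqB.
have [eqB1 eqA2] := nf_mixed_inj (valid_nf_seam V) (valid_nf_seam V')
  (injective_projections _ _ eqM1 eqM2).
by split; apply: injective_projections.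
Qed.

Lemma sim_of_nf x l l' : valid x l -> valid x l' -> nf l = nf l' -> sim (x, l) (x, l').
Proof.
move=> V V' eq_nf; apply: sim_trans (sim_nf_word V) _.
by rewrite eq_nf; apply/sim_sym/sim_nf_word.
Qed.

Lemma factorization_unique mu nu mu' nu' :
  is_path mu -> is_path nu -> is_path mu' -> is_path nu' ->
  psource p mu = prange nu -> psource p mu' = prange nu' ->
  pdeg mu = pdeg mu' -> pdeg nu = pdeg nu' ->
  sim (pcat mu nu) (pcat mu' nu') -> sim mu mu' /\ sim nu nu'.
Proof.
case: mu nu mu' nu' => [x l1] [y l2] [x' l1'] [y' l2'] V1 V2 V1' V2'.
rewrite /prange /= => ey ey' deg1 deg2 S.
have ex : x = x' := sim_range S; subst x' y y'.
have V : valid x (l1 ++ l2) by apply/valid_cat.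
have V' : valid x (l1' ++ l2') by apply/valid_cat.
have [nf1 nf2] := nf_cat_inj V V' deg1 deg2 (sim_nf S).
have S1 := sim_of_nf V1 V1' nf1.
rewrite (sim_source S1) in V2 *.
by split; last exact: sim_of_nf V2 V2' nf2.
Qed.

Lemma two_graph_of_LR : Lambda_T_is_2graph p q.
Proof.
split; first exact: sim_deg.
by split; [exact: factorization_exists | exact: factorization_unique].
Qed.

End NormalForm.

Lemma size_pdeg (la : GTpath F E) : (pdeg la).1 + (pdeg la).2 = size la.2.
Proof. by rewrite /pdeg /=; elim: la.2 => //= [[e|v] l <-]; rewrite ?addnS. Qed.

Lemma sim_isolated (W : word) : size W = 2 ->
  (forall la mu, basic_rel p q la mu -> la.2 <> W /\ mu.2 <> W) ->
  forall la mu, sim la mu -> (la.2 = W <-> mu.2 = W).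
Proof.
move=> sW hW la mu; elim=> {la mu} //.
- by move=> la mu _ IH; split=> /IH.
- by move=> la mu nu _ IH1 _ IH2; split=> [/IH1/IH2|/IH2/IH1].
- by move=> la mu /hW[].
move=> la la' mu mu' S1 IH1 S2 IH2 _ _; rewrite /pcat /=.
have [sz1 sz2] := (sim_size S1, sim_size S2).
have [/[dup] z1 /size0nil -> | pos1] := posnP (size la.2).
  by rewrite sz1 in z1; rewrite (size0nil z1).
have [/[dup] z2 /size0nil -> | pos2] := posnP (size mu.2).
  by rewrite sz2 in z2; rewrite (size0nil z2) !cats0.
have [le|gt] := leqP (size la.2 + size mu.2) 2.
  have le1 : size la.2 <= 1 by rewrite -ltnS -addn1 (leq_trans _ le) // leq_add2l.
  have le2 : size mu.2 <= 1 by rewrite -ltnS -add1n (leq_trans _ le) // leq_add2r.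
  by rewrite (sim_short S1 le1) (sim_short S2 le2).
by split=> /(congr1 size); rewrite size_cat -?sz1 -?sz2 sW => eq2; rewrite eq2 ltnn in gt.
Qed.

Section LROfTwoGraph.
Hypothesis Hgraph : Lambda_T_is_2graph p q.

Lemma sim_two_edges x a b a' b' :
  sim (x, [:: a; b]) (x, [:: a'; b']) ->
  pdeg (x, [:: a]) = pdeg (x, [:: a']) -> pdeg (x, [:: b]) = pdeg (x, [:: b']) ->
  a = a' /\ b = b'.
Proof.
move=> S deg_a deg_b; have [[ra [rb _]] [ra' [rb' _]]] := sim_is_path S.
have [Sa Sb] := Hgraph.2.2 (x, [:: a]) (gt_s p a, [:: b]) (x, [:: a']) (gt_s p a', [:: b'])
  (conj ra I) (conj rb I) (conj ra' I) (conj rb' I) erefl erefl deg_a deg_b S.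
by move: (sim_short Sa isT) (sim_short Sb isT) => [->] [->].
Qed.

Lemma two_colored_word_basic x a b :
  is_path (x, [:: a; b]) -> pdeg (x, [:: a]) != pdeg (x, [:: b]) ->
  exists la mu, basic_rel p q la mu /\ (la.2 = [:: a; b] \/ mu.2 = [:: a; b]).
Proof.
move=> V deg_ab; apply: NNPP => no_basic.
have isolated := @sim_isolated [:: a; b] erefl.
have [|mu [nu [_ [_ [_ [deg_mu [_ S]]]]]]] :=
  Hgraph.2.1 _ (pdeg (x, [:: b])) (pdeg (x, [:: a])) V.
  by rewrite /pdeg /addNN /= !addn0 addnC [(is_col2 b + _)%N]addnC.
have untouched la' mu' : basic_rel p q la' mu' -> la'.2 <> [:: a; b] /\ mu'.2 <> [:: a; b].
  by move=> B; split=> eW; apply: no_basic; exists la', mu'; tauto.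
have [|mu_b _] := cat_inj (t1 := [:: a]) _ ((isolated untouched _ _ S).1 erefl).
  by rewrite -size_pdeg deg_mu size_pdeg.
by move: deg_ab; rewrite -deg_mu /pdeg mu_b eqxx.
Qed.

Hypothesis Htextile : textile p q.

Lemma r_lifting_of_two_graph v e : hv p v = rg e -> exists! f, rg f = v /\ he p f = e.
Proof.
move=> ev; have V : is_path (hv q v, [:: Inr v; Inl e]) by rewrite /is_path /= ev.
have [_ [_ [[f [-> ->]] [[rf pf]|//]]]] := two_colored_word_basic V isT.
exists f; split=> // g [rg_g pg].
have Sf := sim_basic_of f; have Sg := sim_basic_of g.
rewrite rf pf in Sf; rewrite rg_g pg in Sg.
have [[eq_q] [eq_s]] := sim_two_edges (sim_trans (sim_sym Sf) Sg) erefl erefl.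
by apply: Htextile; rewrite ?rf ?rg_g ?pf ?pg.
Qed.

Lemma s_lifting_of_two_graph w e : hv q w = sc e -> exists! f, sc f = w /\ he q f = e.
Proof.
move=> we; have V : is_path (rg e, [:: Inl e; Inr w]) by rewrite /is_path /= we.
have [_ [_ [[f [-> ->]] [//|[qf sf]]]]] := two_colored_word_basic V isT.
exists f; split=> // g [sg qg].
have Sf := sim_basic_of f; have Sg := sim_basic_of g.
rewrite -hom_r qf sf in Sf; rewrite -hom_r qg sg in Sg.
have [[eq_r] [eq_p]] := sim_two_edges (sim_trans Sf (sim_sym Sg)) erefl erefl.
by apply: Htextile; rewrite ?qf ?qg ?sf ?sg.
Qed.

Lemma LR_of_two_graph : LR p q.
Proof. by split=> [v e /r_lifting_of_two_graph | w e /s_lifting_of_two_graph]. Qed.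

End LROfTwoGraph.

End Paths.

Theorem theorem4p5 (F E : graph) (p q : ghom F E) :
  textile p q -> surjective_hom p -> surjective_hom q ->
  (Lambda_T_is_2graph p q <-> LR p q).
Proof.
move=> Ht _ _; split=> [Hgraph|HLR].
- exact: LR_of_two_graph.
- exact: two_graph_of_LR.
Qed.
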